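(* Let $\mathbb{K}\in\{\mathbb{R},\mathbb{C}\}$, $U:=\mathbb{K}^n$, $\mathbf{u}^1,\dots,\mathbf{u}^m\in U$, $\mathbf{U}_m:=[\mathbf{u}^1,\dots,\mathbf{u}^m]$, $U_m:=\mathrm{range}(\mathbf{U}_m)$, and $\mathbf{\Theta}\in\mathbb{K}^{k\times n}$ with $\mathbf{U}_m^{\mathbf{\Theta}}:=\mathbf{\Theta}\mathbf{U}_m$. Let $\mathbf{G}:=(\mathbf{U}_m^{\mathbf{\Theta}})^{\mathrm{H}}\mathbf{U}_m^{\mathbf{\Theta}}$, $l:=\mathrm{rank}(\mathbf{U}_m^{\mathbf{\Theta}})$, and let $(\lambda_i,\mathbf{t}_i)_{i=1}^{l}$ be eigenpairs of $\mathbf{G}$ associated with its nonzero eigenvalues, with orthonormal eigenvectors and $\lambda_1\ge\dots\ge\lambda_l$. For $r\le l$ set $\mathbf{T}_r:=[\mathbf{t}_1,\dots,\mathbf{t}_r]$ and $U_r:=\mathrm{range}(\mathbf{U}_m\mathbf{T}_r)$. For a subspace $V\subseteq U_m$ let $\mathbf{P}_V^{\mathbf{\Theta}}\mathbf{x}\in\arg\min_{\mathbf{w}\in V}\|\mathbf{\Theta}(\mathbf{x}-\mathbf{w})\|$ for $\mathbf{x}\in U_m$, and define $$\Delta^{\mathrm{POD}}(V):=\frac1m\sum_{i=1}^m\|\mathbf{\Theta}(\mathbf{u}^i-\mathbf{P}_V^{\mathbf{\Theta}}\mathbf{u}^i)\|^2.$$ Then $\Delta^{\mathrm{POD}}(U_r)=\frac1m\sum_{i=r+1}^{l}\lambda_i$,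 and for every subspace $V_r\subseteq U_m$ with $\dim(V_r)\le r$, $\Delta^{\mathrm{POD}}(U_r)\le\Delta^{\mathrm{POD}}(V_r)$.
   Context: $\|\cdot\|$ is the Euclidean norm on $\mathbb{K}^k$; $\mathbf{M}^{\mathrm{H}}$ is the (conjugate) transpose; $\mathrm{range}$ is column space. The value $\|\mathbf{\Theta}(\mathbf{x}-\mathbf{P}_V^{\mathbf{\Theta}}\mathbf{x})\|$ does not depend on the choice of minimizer. *)

From mathcomp Require Import all_boot all_order all_algebra.
Set Implicit Arguments. Unset Strict Implicit. Unset Printing Implicit Defensive.
Import Order.TTheory GRing.Theory Num.Theory.
Local Open Scope ring_scope.

(* Vectors of K^n are column vectors 'cV[K]_n.  A subspace is represented by
   a matrix B : 'M[K]_(n,p) and denotes its column space range(B). *)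

(* conjugate transpose, relative to a conjugation cj (id for K = R,
   complex conjugation for K = C) *)
Definition adjmx (K : numFieldType) (cj : K -> K) (p q : nat)
  (A : 'M[K]_(p, q)) : 'M[K]_(q, p) := map_mx cj A^T.

Definition sqnorm (K : numFieldType) (k : nat) (v : 'cV[K]_k) : K :=
  \sum_(i < k) `|v i 0| ^+ 2.

Definition in_range (K : fieldType) (n p : nat) (x : 'cV[K]_n)
  (B : 'M[K]_(n, p)) : bool := (x^T <= B^T)%MS.

(* w is a minimizer of  w' |-> ||Th (x - w')||  over range(B)
   (equivalently of the squared norm) *)
Definition is_Theta_proj (K : numFieldType) (k n p : nat) (Th : 'M[K]_(k, n))
  (B : 'M[K]_(n, p)) (x w : 'cV[K]_n) : Prop :=
  in_range w B /\
  forall w', in_range w' B ->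
    sqnorm (Th *m (x - w)) <= sqnorm (Th *m (x - w')).

(* Delta^POD(V) computed with a choice P i of P_V^Th u^i *)
Definition DeltaPOD (K : numFieldType) (k n m : nat) (Th : 'M[K]_(k, n))
  (U : 'M[K]_(n, m)) (P : 'I_m -> 'cV[K]_n) : K :=
  m%:R^-1 * \sum_(i < m) sqnorm (Th *m (col i U - P i)).

Definition lcols (K : Type) (m l r : nat) (hr : (r <= l)%N) (T : 'M[K]_(m, l))
  : 'M[K]_(m, r) := \matrix_(i < m, j < r) T i (widen_ord hr j).

Definition POD_statement (K : numFieldType) (cj : K -> K) : Prop :=
  forall (n m k : nat) (U : 'M[K]_(n, m)) (Th : 'M[K]_(k, n)),
  let UTh := Th *m U in
  let G := adjmx cj UTh *m UTh in
  let l := \rank UTh in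
  forall (lam : 'I_l -> K) (T : 'M[K]_(m, l)),
    (forall i, G *m col i T = lam i *: col i T) ->
    (forall i, lam i != 0) ->
    adjmx cj T *m T = 1%:M ->
    (forall i j : 'I_l, (i <= j)%N -> lam j <= lam i) ->
  forall (r : nat) (hr : (r <= l)%N),
    let Ur := U *m lcols hr T in
    (exists P : 'I_m -> 'cV[K]_n,
        forall i, is_Theta_proj Th Ur (col i U) (P i)) /\
    (forall P : 'I_m -> 'cV[K]_n,
        (forall i, is_Theta_proj Th Ur (col i U) (P i)) ->
        DeltaPOD Th U P = m%:R^-1 * \sum_(i < l | (r <= i)%N) lam i) /\
    (forall (p : nat) (V : 'M[K]_(n, p)),
        (V^T <= U^T)%MS -> (\rank V <= r)%N ->
        forall PU PV : 'I_m -> 'cV[K]_n,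
          (forall i, is_Theta_proj Th Ur (col i U) (PU i)) ->
          (forall i, is_Theta_proj Th V (col i U) (PV i)) ->
          DeltaPOD Th U PU <= DeltaPOD Th U PV).

From mathcomp Require Import all_boot all_order all_algebra.
From mathcomp Require Import ring.
Set Implicit Arguments. Unset Strict Implicit. Unset Printing Implicit Defensive.
Import Order.TTheory GRing.Theory Num.Theory.
Local Open Scope ring_scope.

(* Write A := Th U_m, so that G = A^H A and G T = T D with T^H T = 1.  As the
   nonzero eigenvalues exhaust the rank of A, A T T^H = A.  The Th-projection
   onto range(U_m T_r) acts on coordinates as T_r T_r^H: its residual
   A (1 - T_r T_r^H) is orthogonal to A T_r and has squared Frobenius norm
   tr D - tr D_r = lam_(r+1) + ... + lam_l.
   Optimality is the Eckart-Young-Ky Fan bound.  If rank(Th V) <= r and P is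
   the orthogonal projector onto range(Th V), the residual of V is at least
   |(1 - P) A|^2 = sum_i (lam_i - d_i) with d_i := |P A t_i|^2.  Here
   0 <= d_i <= lam_i and sum_i d_i / lam_i = tr (P Q) <= tr P <= r, where Q is
   the projector onto range(A), so a fractional knapsack argument gives
   sum_i d_i <= lam_1 + ... + lam_r. *)

Lemma ler_sum_knapsack (K : numFieldType) l r (lam d : 'I_l -> K) :
  (forall i, 0 < lam i) -> (forall i j : 'I_l, (i <= j)%N -> lam j <= lam i) ->
  (forall i, 0 <= d i) -> (forall i, d i <= lam i) ->
  \sum_i (lam i)^-1 * d i <= r%:R ->
  \sum_i d i <= \sum_(i < l | (i < r)%N) lam i.
Proof.
move=> lam_gt0 lam_nonincr d_ge0 d_le weight_le.
have [r_lt_l | l_le_r] := ltnP r l; last first.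
  rewrite [leRHS]big_mkcond /=; apply: ler_sum => i _.
  by rewrite (leq_trans (ltn_ord i) l_le_r).
pose mu := lam (Ordinal r_lt_l); pose c i := (lam i)^-1 * d i.
have mu_ge0 : 0 <= mu by exact/ltW/lam_gt0.
have dE i : d i = lam i * c i by rewrite /c mulVKf ?gt_eqF.
have c_ge0 i : 0 <= c i by rewrite /c mulr_ge0 // invr_ge0 ltW.
have c_le1 i : c i <= 1 by rewrite /c mulrC ler_pdivrMr // mul1r.
(* With mu the r-th weight, d_i <= lam_i + mu (c_i - 1) for i < r and
   d_i <= mu c_i otherwise; summed, the excess over the head sum is
   mu (sum_i c_i - r) <= 0. *)
have d_head (i : 'I_l) : (i < r)%N -> d i <= lam i + mu * (c i - 1).
  move=> i_lt_r; rewrite dE -subr_ge0.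
  have -> : lam i + mu * (c i - 1) - lam i * c i = (lam i - mu) * (1 - c i) by ring.
  by rewrite mulr_ge0 // subr_ge0 ?c_le1 // lam_nonincr // ltnW.
have d_tail (i : 'I_l) : ~~ (i < r)%N -> d i <= mu * c i.
  by rewrite -leqNgt => r_le_i; rewrite dE ler_wpM2r // lam_nonincr.
rewrite (bigID (fun i : 'I_l => (i < r)%N)) /=.
apply: le_trans (_ : \sum_(i < l | (i < r)%N) (lam i + mu * (c i - 1)) +
   \sum_(i < l | ~~ (i < r)%N) mu * c i <= _).
  by apply: lerD; apply: ler_sum => i hi; [apply: d_head | apply: d_tail].
have count_head : \sum_(i < l | (i < r)%N) (1 : K) = r%:R.
  by rewrite (big_ord_narrow (ltnW r_lt_l)) sumr_const card_ord.
rewrite big_split /= -addrA gerDl -!mulr_sumr -mulrDr sumrB count_head addrAC.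
rewrite -(bigID (fun i : 'I_l => (i < r)%N) predT c) /=.
by rewrite mulr_ge0_le0 // subr_le0.
Qed.

Lemma lcolsE (R : pzRingType) m l r (hr : (r <= l)%N) (T : 'M[R]_(m, l)) :
  lcols hr T = T *m pid_mx r.
Proof.
have -> : pid_mx r = colsub (widen_ord hr) 1%:M :> 'M[R]_(l, r).
  by apply/matrixP => i j; rewrite !mxE -val_eqE /=; case: eqP => // ->; rewrite ltn_ord.
by rewrite mulmx_colsub mulmx1; apply/matrixP => i j; rewrite !mxE.
Qed.

Lemma col_lcols (R : Type) m l r (hr : (r <= l)%N) (T : 'M[R]_(m, l)) j :
  col j (lcols hr T) = col (widen_ord hr j) T.
Proof. by apply/matrixP => i k; rewrite !mxE. Qed.

Lemma sum_ord_ge (V : zmodType) l r (F : 'I_l -> V) :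
  \sum_(i < l | (r <= i)%N) F i = \sum_i F i - \sum_(i < l | (i < r)%N) F i.
Proof.
apply/eqP; rewrite eq_sym subr_eq addrC.
rewrite [X in X == _](bigID (fun i : 'I_l => (i < r)%N)) /=.
by apply/eqP; congr (_ + _); apply: eq_bigl => i; rewrite -leqNgt.
Qed.

Lemma in_rangeP (K : fieldType) n p (x : 'cV[K]_n) (B : 'M[K]_(n, p)) :
  reflect (exists z, x = B *m z) (in_range x B).
Proof.
apply: (iffP submxP) => [[z xz] | [z ->]]; last by exists z^T; rewrite trmx_mul.
by exists z^T; rewrite -[x]trmxK xz trmx_mul trmxK.
Qed.

Definition colmx (K : Type) n m (P : 'I_m -> 'cV[K]_n) : 'M[K]_(n, m) :=
  \matrix_(j, i) P i j 0.

Lemma col_colmx (K : Type) n m (P : 'I_m -> 'cV[K]_n) i : col i (colmx P) = P i.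
Proof. by apply/matrixP => j k; rewrite !mxE ord1. Qed.

Lemma colmx_col (K : Type) n m (X : 'M[K]_(n, m)) : colmx (fun i => col i X) = X.
Proof. by apply/matrixP => j i; rewrite !mxE. Qed.

Lemma colmx_range (K : fieldType) n m p (P : 'I_m -> 'cV[K]_n) (B : 'M[K]_(n, p)) :
  (forall i, in_range (P i) B) -> exists Z, colmx P = B *m Z.
Proof.
move=> PB; have : ((colmx P)^T <= B^T)%MS.
  by apply/row_subP => i; rewrite -tr_col col_colmx; apply: PB.
by case/submxP => Z PZ; exists Z^T; rewrite -[colmx P]trmxK PZ trmx_mul trmxK.
Qed.

Lemma is_Theta_proj_sqnorm_eq (K : numFieldType) k n p (Th : 'M[K]_(k, n))
    (B : 'M[K]_(n, p)) x w1 w2 :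
  is_Theta_proj Th B x w1 -> is_Theta_proj Th B x w2 ->
  sqnorm (Th *m (x - w1)) = sqnorm (Th *m (x - w2)).
Proof.
by move=> [w1B w1_min] [w2B w2_min]; apply/le_anti; rewrite w1_min ?w2_min.
Qed.

Lemma DeltaPOD_Theta_proj_eq (K : numFieldType) k n m p (Th : 'M[K]_(k, n))
    (U : 'M[K]_(n, m)) (B : 'M[K]_(n, p)) (P P' : 'I_m -> 'cV[K]_n) :
  (forall i, is_Theta_proj Th B (col i U) (P i)) ->
  (forall i, is_Theta_proj Th B (col i U) (P' i)) ->
  DeltaPOD Th U P = DeltaPOD Th U P'.
Proof.
move=> PP P'P; congr (_ * _); apply: eq_bigr => i _.
exact: is_Theta_proj_sqnorm_eq.
Qed.

Section Adjoint.
Variables (K : numFieldType) (cj : {rmorphism K -> K}).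
Hypothesis cjK : involutive cj.
Hypothesis cj_mul_norm : forall x : K, cj x * x = `|x| ^+ 2.
Local Notation adj := (adjmx cj).

Lemma adjmxE p q (A : 'M[K]_(p, q)) i j : adj A i j = cj (A j i).
Proof. by rewrite !mxE. Qed.

Lemma adjmx_mul p q s (A : 'M[K]_(p, q)) (B : 'M_(q, s)) :
  adj (A *m B) = adj B *m adj A.
Proof. by rewrite /adjmx trmx_mul map_mxM. Qed.

Lemma adjmxD p q (A B : 'M[K]_(p, q)) : adj (A + B) = adj A + adj B.
Proof. by rewrite /adjmx linearD map_mxD. Qed.

Lemma adjmxB p q (A B : 'M[K]_(p, q)) : adj (A - B) = adj A - adj B.
Proof. by rewrite /adjmx linearB map_mxB. Qed.

Lemma adjmxK p q (A : 'M[K]_(p, q)) : adj (adj A) = A.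
Proof. by apply/matrixP => i j; rewrite !mxE cjK. Qed.

Lemma adjmx1 p : adj (1%:M : 'M[K]_p) = 1%:M.
Proof. by rewrite /adjmx trmx1 map_mx1. Qed.

Lemma adjmx0 p q : adj (0 : 'M[K]_(p, q)) = 0.
Proof. by rewrite /adjmx trmx0 map_mx0. Qed.

Lemma adjmx_diag p (d : 'rV[K]_p) : adj (diag_mx d) = diag_mx (map_mx cj d).
Proof. by rewrite /adjmx tr_diag_mx map_diag_mx. Qed.

Lemma adjmx_pid p q r : adj (pid_mx r : 'M[K]_(p, q)) = pid_mx r.
Proof. by rewrite /adjmx tr_pid_mx map_pid_mx. Qed.

Lemma adjmx_lcols_mul m l r (hr : (r <= l)%N) (T : 'M[K]_(m, l)) :
  adj T *m T = 1%:M -> adj (lcols hr T) *m lcols hr T = 1%:M.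
Proof.
move=> orthT; rewrite lcolsE adjmx_mul adjmx_pid -mulmxA (mulmxA (adj T)) orthT.
by rewrite mul1mx pid_mx_id // pid_mx_1.
Qed.

Definition sqfrob p q (X : 'M[K]_(p, q)) := \tr (adj X *m X).

Lemma adjmx_mulmx_diag p q (X : 'M[K]_(p, q)) j :
  (adj X *m X) j j = sqnorm (col j X).
Proof. by rewrite !mxE /sqnorm; apply: eq_bigr => i _; rewrite !mxE cj_mul_norm. Qed.

Lemma sqnorm_ge0 p (v : 'cV[K]_p) : 0 <= sqnorm v.
Proof. by apply: sumr_ge0 => i _; rewrite exprn_ge0. Qed.

Lemma sqnorm_eq0 p (v : 'cV[K]_p) : sqnorm v = 0 -> v = 0.
Proof.
move=> /eqP; rewrite psumr_eq0 => [/allP v0|i _]; last by rewrite exprn_ge0.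
apply/matrixP => i j; rewrite ord1 mxE; have := v0 i (mem_index_enum i).
by rewrite expf_eq0 normr_eq0 => /eqP.
Qed.

Lemma sqfrobE p q (X : 'M[K]_(p, q)) : sqfrob X = \sum_j sqnorm (col j X).
Proof. by apply: eq_bigr => j _; rewrite adjmx_mulmx_diag. Qed.

Lemma sqfrob_ge0 p q (X : 'M[K]_(p, q)) : 0 <= sqfrob X.
Proof. by rewrite sqfrobE; apply: sumr_ge0 => j _; apply: sqnorm_ge0. Qed.

Lemma sqfrob_eq0 p q (X : 'M[K]_(p, q)) : sqfrob X = 0 -> X = 0.
Proof.
rewrite sqfrobE => /eqP; rewrite psumr_eq0 => [/allP X0|j _]; last exact: sqnorm_ge0.
apply/matrixP => i j; have /eqP/sqnorm_eq0/matrixP/(_ i 0) := X0 j (mem_index_enum j).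
by rewrite !mxE.
Qed.

Lemma sqnorm_sqfrob p (v : 'cV[K]_p) : sqnorm v = sqfrob v.
Proof.
by rewrite sqfrobE big_ord1; congr sqnorm; apply/matrixP => i j; rewrite ord1 mxE.
Qed.

Lemma sqfrobD_orth p q (X Y : 'M[K]_(p, q)) :
  adj Y *m X = 0 -> sqfrob (X + Y) = sqfrob X + sqfrob Y.
Proof.
move=> YX; have XY : adj X *m Y = 0 by rewrite -[Y]adjmxK -adjmx_mul YX adjmx0.
by rewrite /sqfrob adjmxD mulmxDl !mulmxDr YX XY addr0 add0r mxtraceD.
Qed.

Lemma sqfrob_mulmx_adj p q s (X : 'M[K]_(p, q)) (T : 'M[K]_(s, q)) :
  adj T *m T = 1%:M -> sqfrob (X *m adj T) = sqfrob X.
Proof.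
move=> orthT; rewrite /sqfrob adjmx_mul adjmxK -mulmxA mxtrace_mulC.
by rewrite -!mulmxA orthT mulmx1.
Qed.

Lemma sqfrob_mulmx_adj_id p q s (X : 'M[K]_(p, q)) (T : 'M[K]_(q, s)) :
  X *m T *m adj T = X -> sqfrob (X *m T) = sqfrob X.
Proof.
by move=> XT; rewrite /sqfrob adjmx_mul -mulmxA mxtrace_mulC -mulmxA XT.
Qed.

Lemma unitmx_gram q s (B : 'M[K]_(q, s)) : row_free B^T -> adj B *m B \in unitmx.
Proof.
move=> freeB; rewrite -row_free_unit; apply/inj_row_free => v vM0.
have Bv0 : B *m adj v = 0.
  apply: sqfrob_eq0; rewrite /sqfrob adjmx_mul adjmxK mulmxA -(mulmxA v) vM0.
  by rewrite !mul0mx mxtrace0.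
have : (adj v)^T *m B^T = 0 *m B^T by rewrite mul0mx -trmx_mul Bv0 trmx0.
by move/(row_free_inj freeB) => v0; rewrite -[v]adjmxK -[adj v]trmxK v0 trmx0 adjmx0.
Qed.

Definition orth_proj p (P : 'M[K]_p) := adj P = P /\ P *m P = P.

Lemma orth_projC p (P : 'M[K]_p) : orth_proj P -> orth_proj (1%:M - P).
Proof.
case=> adjP PP; split; first by rewrite adjmxB adjmx1 adjP.
by rewrite mulmxBl !mulmxBr !mul1mx mulmx1 PP subrr subr0.
Qed.

Lemma orth_proj_gram p q (P : 'M[K]_p) (X : 'M[K]_(p, q)) :
  orth_proj P -> adj (P *m X) *m (P *m X) = adj X *m P *m X.
Proof. by case=> adjP PP; rewrite adjmx_mul adjP -mulmxA (mulmxA P) PP mulmxA. Qed.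

Lemma gram_orth_projD p q (P : 'M[K]_p) (X : 'M[K]_(p, q)) : orth_proj P ->
  adj X *m X = adj (P *m X) *m (P *m X) + adj ((1%:M - P) *m X) *m ((1%:M - P) *m X).
Proof.
move=> Pproj; rewrite orth_proj_gram // orth_proj_gram; last exact: orth_projC.
by rewrite -mulmxDl -mulmxDr (addrC P) subrK mulmx1.
Qed.

Lemma sqfrob_orth_projD p q (P : 'M[K]_p) (X : 'M[K]_(p, q)) : orth_proj P ->
  sqfrob X = sqfrob (P *m X) + sqfrob ((1%:M - P) *m X).
Proof. by move=> Pproj; rewrite /sqfrob -mxtraceD -gram_orth_projD. Qed.

Lemma sqfrob_orth_projM_le p q (P : 'M[K]_p) (X : 'M[K]_(p, q)) :
  orth_proj P -> sqfrob (P *m X) <= sqfrob X.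
Proof. by move=> Pproj; rewrite (sqfrob_orth_projD X Pproj) lerDl sqfrob_ge0. Qed.

Lemma mxtrace_orth_projM_le p (P Q : 'M[K]_p) :
  orth_proj P -> orth_proj Q -> \tr (P *m Q) <= \tr P.
Proof.
move=> [adjP PP] Qproj; rewrite -subr_ge0.
have := sqfrob_ge0 ((1%:M - Q) *m P).
rewrite /sqfrob orth_proj_gram; last exact: orth_projC.
by rewrite adjP mxtrace_mulC mulmxA PP mulmxBr mulmx1 linearB.
Qed.

Lemma orth_proj_range q p (F : 'M[K]_(q, p)) :
  exists P, [/\ orth_proj P, P *m F = F & \tr P = (\rank F)%:R].
Proof.
set B := (row_base F^T)^T.
have FB : F = B *m (F^T *m pinvmx (row_base F^T))^T.
  by rewrite -trmx_mul mulmxKpV ?trmxK // eq_row_base.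
set M := adj B *m B.
have M_unit : M \in unitmx by apply: unitmx_gram; rewrite trmxK row_base_free.
have adjMV : adj (invmx M) = invmx M.
  by rewrite /adjmx trmx_inv map_invmx -/(adj M) /M adjmx_mul adjmxK.
have PB : B *m invmx M *m adj B *m B = B by rewrite -!mulmxA mulVmx // mulmx1.
exists (B *m invmx M *m adj B); split.
- by split; [rewrite !adjmx_mul adjmxK adjMV mulmxA | rewrite !mulmxA PB].
- by rewrite [X in _ *m X = _]FB mulmxA PB -FB.
- by rewrite mxtrace_mulC mulmxA mulmxV // mxtrace1 mxrank_tr.
Qed.

Lemma is_Theta_proj_orth k n p (Th : 'M[K]_(k, n)) (B : 'M[K]_(n, p)) x w :
  in_range w B -> adj (Th *m B) *m (Th *m (x - w)) = 0 -> is_Theta_proj Th B x w.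
Proof.
move=> /in_rangeP [z ->] orth_residual; split; first by apply/in_rangeP; exists z.
move=> _ /in_rangeP [z' ->].
have -> : Th *m (x - B *m z') = Th *m (x - B *m z) + Th *m B *m (z - z').
  by rewrite !mulmxBr !mulmxA addrA subrK.
rewrite !sqnorm_sqfrob sqfrobD_orth ?lerDl ?sqfrob_ge0 //.
by rewrite adjmx_mul -mulmxA orth_residual mulmx0.
Qed.

Lemma DeltaPOD_sqfrob k n m (Th : 'M[K]_(k, n)) (U : 'M[K]_(n, m)) P :
  DeltaPOD Th U P = m%:R^-1 * sqfrob (Th *m (U - colmx P)).
Proof.
rewrite /DeltaPOD sqfrobE; congr (_ * _); apply: eq_bigr => i _.
by rewrite -(col_colmx P i) !colE -mulmxBl mulmxA.
Qed.

Section EigenBasis.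
Variables (k m s : nat) (A : 'M[K]_(k, m)) (T : 'M[K]_(m, s)) (d : 'I_s -> K).
Local Notation G := (adj A *m A).
Local Notation D := (diag_mx (\row_i d i)).
Hypothesis eigT : forall i, G *m col i T = d i *: col i T.
Hypothesis orthT : adj T *m T = 1%:M.

Lemma gram_mul_eigen : G *m T = T *m D.
Proof.
apply/matrixP => i j; have := eigT j; rewrite !colE mulmxA => /matrixP/(_ i 0).
by rewrite -!colE mul_mx_diag !mxE => ->; rewrite mulrC.
Qed.

Lemma gram_eigen : adj (A *m T) *m (A *m T) = D.
Proof.
by rewrite adjmx_mul -mulmxA (mulmxA (adj A)) gram_mul_eigen mulmxA orthT mul1mx.
Qed.

Lemma adjmx_eigen_diag : adj D = D.
Proof. by rewrite -gram_eigen adjmx_mul adjmxK. Qed.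

Lemma eigen_conj i : cj (d i) = d i.
Proof.
by have /matrixP/(_ i i) := adjmx_eigen_diag; rewrite adjmxE !mxE eqxx !mulr1n.
Qed.

Lemma eigen_ge0 i : 0 <= d i.
Proof.
have := sqnorm_ge0 (col i (A *m T)).
by rewrite -adjmx_mulmx_diag gram_eigen !mxE eqxx mulr1n.
Qed.

Lemma adjmx_mul_gram : adj T *m G = D *m adj T.
Proof.
by rewrite -[D]adjmx_eigen_diag -adjmx_mul -gram_mul_eigen !adjmx_mul adjmxK.
Qed.

Lemma mxtrace_eigen : \tr D = \sum_i d i.
Proof. by rewrite mxtrace_diag; apply: eq_bigr => i _; rewrite mxE. Qed.

Lemma residual_orth : adj (A *m T) *m (A *m (1%:M - T *m adj T)) = 0.
Proof.
rewrite adjmx_mul -mulmxA (mulmxA (adj A)) mulmxA adjmx_mul_gram.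
by rewrite mulmxBr mulmx1 -!mulmxA (mulmxA (adj T)) orthT mul1mx subrr.
Qed.

Lemma sqfrob_eigen_proj : sqfrob (A *m T *m adj T) = \tr D.
Proof. by rewrite sqfrob_mulmx_adj // /sqfrob gram_eigen. Qed.

Lemma sqfrob_residual : sqfrob (A *m (1%:M - T *m adj T)) = sqfrob A - \tr D.
Proof.
have splitA : A = A *m (1%:M - T *m adj T) + A *m T *m adj T.
  by rewrite mulmxBr mulmx1 mulmxA subrK.
rewrite [in RHS]splitA sqfrobD_orth ?sqfrob_eigen_proj ?addrK //.
by rewrite adjmx_mul adjmxK -mulmxA residual_orth mulmx0.
Qed.

Section NonzeroEigen.
Hypothesis d_neq0 : forall i, d i != 0.
Local Notation Dinv := (diag_mx (\row_i (d i)^-1)).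

Lemma eigen_gt0 i : 0 < d i.
Proof. by rewrite lt_def d_neq0 eigen_ge0. Qed.

Lemma mulmx_inv_eigen : Dinv *m D = 1%:M.
Proof. by rewrite mulmx_diag; apply/matrixP => i j; rewrite !mxE mulVf. Qed.

Lemma mulmx_eigen_inv : D *m Dinv = 1%:M.
Proof. by rewrite mulmx_diag; apply/matrixP => i j; rewrite !mxE mulfV. Qed.

Lemma adjmx_eigen_inv : adj Dinv = Dinv.
Proof.
by rewrite adjmx_diag; congr diag_mx; apply/rowP => i; rewrite !mxE fmorphV eigen_conj.
Qed.

Lemma eigen_orth_proj : orth_proj (A *m T *m Dinv *m adj T *m adj A).
Proof.
split; first by rewrite !adjmx_mul !adjmxK adjmx_eigen_inv !mulmxA.
have -> : A *m T *m Dinv *m adj T *m adj A *m (A *m T *m Dinv *m adj T *m adj A) =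
    A *m T *m Dinv *m (adj (A *m T) *m (A *m T)) *m Dinv *m adj T *m adj A.
  by rewrite adjmx_mul !mulmxA.
by rewrite gram_eigen -(mulmxA _ Dinv D) mulmx_inv_eigen mulmx1.
Qed.

Lemma sum_eigen_inv_proj_le (P : 'M[K]_k) : orth_proj P ->
  \sum_i (d i)^-1 * sqnorm (col i (P *m A *m T)) <= \tr P.
Proof.
move=> Pproj.
have -> : \sum_i (d i)^-1 * sqnorm (col i (P *m A *m T)) =
    \tr (Dinv *m (adj (A *m T) *m P *m (A *m T))).
  rewrite -orth_proj_gram // /mxtrace; apply: eq_bigr => i _.
  by rewrite mul_diag_mx mxE [_ 0 i]mxE adjmx_mulmx_diag mulmxA.
have -> : \tr (Dinv *m (adj (A *m T) *m P *m (A *m T))) =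
    \tr (P *m (A *m T *m Dinv *m adj T *m adj A)).
  by rewrite adjmx_mul !mulmxA; do 3![rewrite mxtrace_mulC !mulmxA].
exact: mxtrace_orth_projM_le Pproj eigen_orth_proj.
Qed.

Lemma gram_eigen_span : (\rank A <= s)%N -> T *m adj T *m G = G.
Proof.
move=> rankA.
have rankT : \rank T = s.
  apply/eqP; rewrite eqn_leq rank_leq_col /=.
  by have := mxrankM_maxr (adj T) T; rewrite orthT mxrank1.
have GTDinv : G *m T *m Dinv = T.
  by rewrite gram_mul_eigen -mulmxA mulmx_eigen_inv mulmx1.
have TG : (T^T <= G^T)%MS by rewrite -{1}GTDinv !trmx_mul mulmxA submxMl.
have GT : (G^T <= T^T)%MS.
  have [le_rank <-] := mxrank_leqif_sup TG; rewrite eqn_leq le_rank !mxrank_tr /=.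
  by rewrite rankT; apply: leq_trans (mxrankM_maxr _ _) rankA.
have [X GX] := submxP GT.
by rewrite -[G]trmxK GX trmx_mul trmxK !mulmxA -(mulmxA T) orthT mulmx1.
Qed.

Lemma eigen_span : (\rank A <= s)%N -> A *m T *m adj T = A.
Proof.
move=> rankA; have GN : G *m (1%:M - T *m adj T) = 0.
  have := congr1 (fun X : 'M_m => adj X) (gram_eigen_span rankA).
  rewrite !adjmx_mul !adjmxK => GTT.
  by rewrite mulmxBr mulmx1 GTT subrr.
have /sqfrob_eq0/eqP : sqfrob (A *m (1%:M - T *m adj T)) = 0.
  by rewrite /sqfrob adjmx_mul -mulmxA (mulmxA (adj A)) GN mulmx0 mxtrace0.
by rewrite mulmxBr mulmx1 subr_eq0 mulmxA => /eqP.
Qed.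

Section EckartYoung.
Hypothesis rankA : (\rank A <= s)%N.
Hypothesis d_nonincr : forall i j : 'I_s, (i <= j)%N -> d j <= d i.

Lemma sqfrob_eigen : sqfrob A = \tr D.
Proof. by rewrite -{1}(eigen_span rankA) sqfrob_eigen_proj. Qed.

Lemma sqnorm_proj_eigen_le (P : 'M[K]_k) i :
  orth_proj P -> sqnorm (col i (P *m A *m T)) <= d i.
Proof.
move=> Pproj; have /matrixP/(_ i i) := gram_orth_projD (A *m T) Pproj.
rewrite gram_eigen [in X in _ = X]mxE !adjmx_mulmx_diag !mxE eqxx mulr1n => ->.
by rewrite mulmxA lerDl sqnorm_ge0.
Qed.

Lemma sqfrob_orth_projC_eigen (P : 'M[K]_k) : orth_proj P ->
  sqfrob ((1%:M - P) *m A) = \tr D - \sum_i sqnorm (col i (P *m A *m T)).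
Proof.
move=> Pproj; rewrite -sqfrob_eigen (sqfrob_orth_projD A Pproj) -sqfrobE.
rewrite (sqfrob_mulmx_adj_id (X := P *m A)); last first.
  by rewrite -!mulmxA (mulmxA A) (eigen_span rankA).
by rewrite (addrC (sqfrob (P *m A))) addrK.
Qed.

Lemma eckart_young r p (F : 'M[K]_(k, p)) (Y : 'M[K]_(p, m)) :
  (\rank F <= r)%N -> \sum_(i < s | (r <= i)%N) d i <= sqfrob (A - F *m Y).
Proof.
move=> rankF; have [P [Pproj PF trP]] := orth_proj_range F.
have head_le : \sum_i sqnorm (col i (P *m A *m T)) <= \sum_(i < s | (i < r)%N) d i.
  apply: (ler_sum_knapsack (d := fun i => sqnorm (col i (P *m A *m T))) eigen_gt0).
  - exact: d_nonincr.
  - by move=> i; apply: sqnorm_ge0.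
  - by move=> i; apply: sqnorm_proj_eigen_le.
  - by apply: le_trans (sum_eigen_inv_proj_le Pproj) _; rewrite trP ler_nat.
have residual_le : sqfrob ((1%:M - P) *m A) <= sqfrob (A - F *m Y).
  have PcF : (1%:M - P) *m F = 0 by rewrite mulmxBl mul1mx PF subrr.
  have -> : (1%:M - P) *m A = (1%:M - P) *m (A - F *m Y).
    by rewrite mulmxBr mulmxA PcF mul0mx subr0.
  exact/sqfrob_orth_projM_le/orth_projC.
apply: le_trans residual_le; rewrite sqfrob_orth_projC_eigen // mxtrace_eigen.
by rewrite sum_ord_ge lerD2l lerN2.
Qed.

End EckartYoung.
End NonzeroEigen.
End EigenBasis.

Section POD.
Variables (n m k : nat) (U : 'M[K]_(n, m)) (Th : 'M[K]_(k, n)).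
Local Notation A := (Th *m U).
Local Notation l := (\rank A).
Variables (lam : 'I_l -> K) (T : 'M[K]_(m, l)).
Hypothesis eigT : forall i, adj A *m A *m col i T = lam i *: col i T.
Hypothesis lam_neq0 : forall i, lam i != 0.
Hypothesis orthT : adj T *m T = 1%:M.
Hypothesis lam_nonincr : forall i j : 'I_l, (i <= j)%N -> lam j <= lam i.
Variables (r : nat) (hr : (r <= l)%N).
Local Notation Tr := (lcols hr T).

Lemma eigen_lcols j : adj A *m A *m col j Tr = lam (widen_ord hr j) *: col j Tr.
Proof. by rewrite col_lcols eigT. Qed.

Lemma is_Theta_proj_POD i :
  is_Theta_proj Th (U *m Tr) (col i U) (col i (U *m Tr *m adj Tr)).
Proof.
apply: is_Theta_proj_orth.
  by apply/in_rangeP; exists (adj Tr *m delta_mx i 0); rewrite colE !mulmxA.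
have -> : Th *m (col i U - col i (U *m Tr *m adj Tr)) =
    A *m (1%:M - Tr *m adj Tr) *m delta_mx i 0.
  by rewrite !colE mulmxBr mulmxBr mulmx1 mulmxBl !mulmxA.
rewrite (mulmxA Th) mulmxA.
by rewrite (residual_orth eigen_lcols (adjmx_lcols_mul hr orthT)) mul0mx.
Qed.

Lemma DeltaPOD_POD_eq : DeltaPOD Th U (fun i => col i (U *m Tr *m adj Tr)) =
  m%:R^-1 * \sum_(i < l | (r <= i)%N) lam i.
Proof.
rewrite DeltaPOD_sqfrob colmx_col.
have -> : Th *m (U - U *m Tr *m adj Tr) = A *m (1%:M - Tr *m adj Tr).
  by rewrite mulmxBr mulmxBr mulmx1 !mulmxA.
rewrite (sqfrob_residual eigen_lcols (adjmx_lcols_mul hr orthT)).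
rewrite (sqfrob_eigen eigT orthT lam_neq0 (leqnn _)) !mxtrace_eigen.
by rewrite sum_ord_ge (big_ord_narrow hr).
Qed.

Lemma DeltaPOD_POD_le p (V : 'M[K]_(n, p)) (PV : 'I_m -> 'cV[K]_n) :
  (\rank V <= r)%N -> (forall i, is_Theta_proj Th V (col i U) (PV i)) ->
  m%:R^-1 * \sum_(i < l | (r <= i)%N) lam i <= DeltaPOD Th U PV.
Proof.
move=> rankV PV_proj; have [Z PZ] := colmx_range (fun i => (PV_proj i).1).
rewrite DeltaPOD_sqfrob PZ ler_wpM2l ?invr_ge0 ?ler0n // mulmxBr mulmxA.
apply: (eckart_young eigT orthT lam_neq0 (leqnn _) lam_nonincr).
exact: leq_trans (mxrankM_maxr _ _) rankV.
Qed.

End POD.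
End Adjoint.

Lemma POD_statement_conj (K : numFieldType) (cj : {rmorphism K -> K}) :
  involutive cj -> (forall x : K, cj x * x = `|x| ^+ 2) -> POD_statement cj.
Proof.
move=> cjK cj_mul_norm n m k U Th /= lam T eigT lam_neq0 orthT lam_nonincr r hr.
have POD_proj := is_Theta_proj_POD cjK cj_mul_norm eigT orthT hr.
have POD_value P : (forall i, is_Theta_proj Th (U *m lcols hr T) (col i U) (P i)) ->
    DeltaPOD Th U P = m%:R^-1 * \sum_(i < \rank (Th *m U) | (r <= i)%N) lam i.
  move=> P_proj; rewrite (DeltaPOD_Theta_proj_eq P_proj POD_proj).
  exact: DeltaPOD_POD_eq.
split; first by exists (fun i => col i (U *m lcols hr T *m adjmx cj (lcols hr T))).
split; first exact: POD_value.
move=> p V _ rankV PU PV PU_proj PV_proj.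
by rewrite POD_value //; apply: DeltaPOD_POD_le PV_proj.
Qed.

Theorem proposition5p3 :
  (forall R : realFieldType, POD_statement (fun x : R => x)) /\
  (forall C : numClosedFieldType, POD_statement (@Num.conj C)).
Proof.
split.
  move=> R; apply: (@POD_statement_conj R idfun) => // x.
  by rewrite real_normK ?num_real // expr2.
move=> C; apply: POD_statement_conj; first exact: conjCK.
by move=> x; rewrite normCKC.
Qed.
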